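(* (1) $\mathcal{K}^{\mathsf{TS}}(K_1)=\{k:k\ge1\}$, $\mathcal{K}^{\mathsf{TS}}(K_2)=\{1\}$, and $\mathcal{K}^{\mathsf{TS}}(K_n)=\{1,n-1\}$ for $n\ge3$. (2) $\mathcal{K}^{\mathsf{TS}}(P_n)=\{1\}$ for $n\ge2$; $\mathcal{K}^{\mathsf{TS}}(C_n)=\{1\}$ for $n\ge4$; $\mathcal{K}^{\mathsf{TS}}(K_{m,n})=\{1\}$ for all $m,n\ge1$. (3) $\mathcal{K}^{\mathsf{TS}}(B_1)=\{1,2\}$ and $\mathcal{K}^{\mathsf{TS}}(B_p)=\{1\}$ for $p\ge2$. (4) $\mathcal{K}^{\mathsf{TS}}(F_p)=\{1,2\}$ for every $p\ge1$.
   Context: All graphs are finite, simple, undirected. A $k$-clique of a graph $H$ is a set of $k$ pairwise adjacent vertices. For a graph $H$ and integer $k\ge1$, the Token Sliding graph $\mathsf{TS}_k(H)$ has as vertices the $k$-cliques of $H$, and two $k$-cliques $A,B$ are adjacent iff $A\setminus B=\{u\}$, $B\setminus A=\{v\}$ for some vertices $u,v$ with $uv\in E(H)$. For a graph $G$, $\mathcal{K}^{\mathsf{TS}}(G)=\{k\ge1:\ \exists H,\ \mathsf{TS}_k(H)\cong G\}$. $K_n$, $P_n$, $C_n$ denote the complete graph, path, cycle on $n$ vertices; $K_{m,n}$ the complete bipartite graph. The book graph $B_p$ ($p\ge1$) consists of $p$ triangles sharing a common edge; the friendship graph $F_p$ ($p\ge1$) consists of $p$ triangles sharing a common vertex (and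 otherwise disjoint). *)

From mathcomp Require Import all_boot.
Set Implicit Arguments. Unset Strict Implicit. Unset Printing Implicit Defensive.

Definition simple_graph (T : finType) (e : rel T) : Prop :=
  symmetric e /\ irreflexive e.

Definition is_kclique (T : finType) (e : rel T) (k : nat) (A : {set T}) : bool :=
  (#|A| == k) && [forall x in A, forall y in A, (x != y) ==> e x y].

Definition kclique (T : finType) (e : rel T) (k : nat) :=
  {A : {set T} | is_kclique e k A}.

Definition ts_adj (T : finType) (e : rel T) (k : nat) : rel (kclique e k) :=
  fun A B => [exists u, exists v,
    [&& (val A :\: val B == [set u]), (val B :\: val A == [set v]) & e u v]].

Definition graph_iso (V W : finType) (eV : rel V) (eW : rel W) : Prop :=
  exists f : V -> W, bijective f /\ forall x y, eW (f x) (f y) = eV x y.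

Definition KTS (V : finType) (eG : rel V) (k : nat) : Prop :=
  1 <= k /\ exists (T : finType) (eH : rel T),
    simple_graph eH /\ graph_iso eG (@ts_adj T eH k).

Unset Implicit Arguments.
Definition Kn (n : nat) : rel 'I_n := fun x y => x != y.
Definition Pn (n : nat) : rel 'I_n := fun x y => (x.+1 == y :> nat) || (y.+1 == x :> nat).
Definition Cn (n : nat) : rel 'I_n :=
  fun x y => (x != y) && ((x.+1 %% n == y) || (y.+1 %% n == x)).
Definition Kmn (m n : nat) : rel ('I_m + 'I_n) :=
  fun x y => match x, y with inl _, inr _ | inr _, inl _ => true | _, _ => false end.
(* Book graph B_p: spine vertices 0,1; pages 2..p+1 adjacent to both 0 and 1. *)
Definition Bp (p : nat) : rel 'I_(p.+2) :=
  fun x y => (x != y) && ((x < 2) || (y < 2)).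
(* Friendship graph F_p: centre 0; triangles {0, 2i+1, 2i+2}, i < p. *)
Definition Fp (p : nat) : rel 'I_(p.*2.+1) :=
  fun x y => (x != y) && [|| x == 0 :> nat, y == 0 :> nat | (x.-1)./2 == (y.-1)./2].

From mathcomp Require Import all_boot zify.
Set Implicit Arguments. Unset Strict Implicit. Unset Printing Implicit Defensive.

(* Two k-cliques adjacent in TS_k(H) are C :\ v and C :\ u for the (k+1)-clique C = P :|: Q,
   and all the sets C :\ z, z in C, are pairwise adjacent. Hence for k >= 2 every edge of
   TS_k(H) lies in a triangle, and for k >= 3 in a K_4; this excludes triangle-free graphs and
   friendship graphs. A common neighbour of C :\ v and C :\ u not of the form C :\ z must be
   y |: (C :\ u :\ v) for an apex y adjacent to all of C. This forces a complete TS_k(H),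
   k >= 2, to consist of the k+1 sets C :\ z only, and for p >= 2 it makes the two
   common neighbours of the spine of B_p adjacent. Conversely every graph is its own TS_1,
   K_1 = TS_k(K_k), K_n = TS_(n-1)(K_n) and F_p = TS_2(B_p). *)

Section TokenSliding.
Variables (T : finType) (e : rel T).

Definition ts_step (A B : {set T}) : bool :=
  [exists u, exists v, [&& A :\: B == [set u], B :\: A == [set v] & e u v]].

Lemma ts_adjE k (P Q : kclique e k) : ts_adj P Q = ts_step (val P) (val Q).
Proof. by []. Qed.

Definition clique (X : {set T}) := forall x y, x \in X -> y \in X -> x != y -> e x y.

Lemma kcliqueP k (A : {set T}) : is_kclique e k A <-> #|A| = k /\ clique A.
Proof.
split.
- case/andP=> /eqP cA /forall_inP clA; split=> // x y xA yA xy.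
  by move: (clA x xA) => /forall_inP /(_ y yA) /implyP /(_ xy).
- case=> cA clA; apply/andP; split; first by rewrite cA.
  by apply/forall_inP => x xA; apply/forall_inP => y yA; apply/implyP; apply: clA.
Qed.

Lemma card_kclique k (P : kclique e k) : #|val P| = k.
Proof. by case/kcliqueP: (valP P). Qed.

Lemma clique_subset (A B : {set T}) : A \subset B -> clique B -> clique A.
Proof. by move=> /subsetP AB clB x y /AB xB /AB yB; apply: clB. Qed.

Lemma card_setD1 (A : {set T}) a : a \in A -> #|A| = #|A :\ a|.+1.
Proof. by move=> aA; rewrite (cardsD1 a) aA. Qed.

Lemma setD_set1E (A B : {set T}) u x :
  A :\: B == [set u] -> (x \in A) && (x \notin B) = (x == u).
Proof. by move=> /eqP /setP /(_ x); rewrite !inE andbC. Qed.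

Lemma ts_stepI (A B : {set T}) a b :
  A :\: B == [set a] -> B :\: A == [set b] -> e a b -> ts_step A B.
Proof. by move=> AB BA ab; apply/existsP; exists a; apply/existsP; exists b; rewrite AB BA ab. Qed.

Lemma ts_step_irr (A : {set T}) : ts_step A A = false.
Proof.
apply/negbTE/existsP => -[u /existsP [v /and3P [AA _ _]]].
by have := setD_set1E u AA; rewrite eqxx andbN.
Qed.

Lemma ts_step_out_uniq (A B : {set T}) a b : ts_step A B ->
  a \in A -> a \notin B -> b \in A -> b \notin B -> a = b.
Proof.
case/existsP=> u /existsP [v /and3P [AB _ _]] aA aB bA bB.
have /eqP -> : a == u by rewrite -(setD_set1E a AB) aA aB.
by have /eqP -> : b == u by rewrite -(setD_set1E b AB) bA bB.
Qed.

Lemma ts_step_sub (A B : {set T}) y x : ts_step A B ->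
  y \in A -> y \notin B -> x \in A -> x != y -> x \in B.
Proof.
move=> AB yA yB xA; apply: contraNT => xB.
by rewrite (ts_step_out_uniq AB xA xB yA yB).
Qed.

Lemma ts_step_edge (A B : {set T}) a b : ts_step A B ->
  a \in A -> a \notin B -> b \in B -> b \notin A -> e a b.
Proof.
case/existsP=> u /existsP [v /and3P [AB BA uv]] aA aB bB bA.
have /eqP -> : a == u by rewrite -(setD_set1E a AB) aA aB.
by have /eqP -> : b == v by rewrite -(setD_set1E b BA) bB bA.
Qed.

Lemma ts_step_setD1 (C : {set T}) z1 z2 : clique C ->
  z1 \in C -> z2 \in C -> z1 != z2 -> ts_step (C :\ z1) (C :\ z2).
Proof.
move=> clC z1C z2C z12; apply: (@ts_stepI _ _ z2 z1); last by apply: clC; rewrite // eq_sym.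
- apply/eqP/setP => x; rewrite !inE.
  case: (eqVneq x z2) => [->|_] /=; first by rewrite eq_sym z12 z2C.
  by case: (x \in C); rewrite ?andbF ?andbT.
- apply/eqP/setP => x; rewrite !inE.
  case: (eqVneq x z1) => [->|_] /=; first by rewrite z12 z1C.
  by case: (x \in C); rewrite ?andbF ?andbT.
Qed.

Lemma kclique_setD1 k (C : {set T}) z : clique C -> #|C| = k.+1 -> z \in C ->
  is_kclique e k (C :\ z).
Proof.
move=> clC cC zC; apply/kcliqueP; split; first by move: cC; rewrite (card_setD1 zC) => -[].
by apply: clique_subset clC; apply: subsetDl.
Qed.

Lemma kclique_of_setD1 k (C : {set T}) z : clique C -> #|C| = k.+1 -> z \in C ->
  exists R : kclique e k, val R = C :\ z.
Proof. by move=> clC cC zC; exists (exist (is_kclique e k) _ (kclique_setD1 clC cC zC)). Qed.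

Lemma setD1_inj (C : {set T}) : {in C &, injective (fun z => C :\ z)}.
Proof.
move=> z1 z2 z1C z2C /setP /(_ z1); rewrite !inE eqxx z1C /=.
by case: eqVneq.
Qed.

Lemma exists_notin (X : {set T}) (s : seq T) : size s < #|X| -> exists2 w, w \in X & w \notin s.
Proof.
move=> sX; apply/exists_inP; apply: contraTT sX => /exists_inPn sub.
rewrite -leqNgt; apply: leq_trans (card_size s).
by apply/subset_leq_card/subsetP => x /sub; rewrite negbK.
Qed.

Lemma subset_setD1 k (C D : {set T}) : #|C| = k.+1 -> #|D| = k -> D \subset C ->
  exists2 z, z \in C & D = C :\ z.
Proof.
move=> cC cD DC.
have : 0 < #|C :\: D| by rewrite cardsD (setIidPr DC) cC cD subSnn.
case/card_gt0P => z; rewrite inE => /andP [zD zC]; exists z => //.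
apply/eqP; rewrite eqEcard -(ltnS #|C :\ z|) -card_setD1 // cC cD leqnn andbT.
by apply/subsetP => x xD; rewrite !inE (subsetP DC x xD) andbT; apply: contraNneq zD => <-.
Qed.

End TokenSliding.

Section Blocks.
Variables (T : finType) (e : rel T).
Hypothesis e_sym : symmetric e.

Lemma clique_setU1 (C : {set T}) y : clique e C -> (forall c, c \in C -> e y c) ->
  clique e (y |: C).
Proof.
move=> clC ey a b; rewrite !inE => /predU1P [->|aC] /predU1P [->|bC] ab.
- by rewrite eqxx in ab.
- exact: ey.
- by rewrite e_sym; apply: ey.
- exact: clC.
Qed.

Lemma ts_adj_block k (P Q : kclique e k) : ts_adj P Q -> exists u v (C : {set T}),
  [/\ clique e C, #|C| = k.+1, u \in C & v \in C] /\
  [/\ u != v, val P = C :\ v & val Q = C :\ u].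
Proof.
case: P Q => A PA [B QB]; rewrite ts_adjE /=.
case/existsP=> u /existsP [v /and3P [AB BA uv]].
move/kcliqueP: PA => [cA clA]; move/kcliqueP: QB => [cB clB].
have /andP [uA uB] : (u \in A) && (u \notin B) by rewrite (setD_set1E u AB).
have /andP [vB vA] : (v \in B) && (v \notin A) by rewrite (setD_set1E v BA).
have ev z : z \in A -> e v z.
  move=> zA; case zB: (z \in B).
  - by apply: clB => //; apply: contraNneq vA => ->.
  - have /eqP -> : z == u by rewrite -(setD_set1E z AB) zA zB.
    by rewrite e_sym.
exists u, v, (v |: A); split; split.
- exact: clique_setU1.
- by rewrite cardsU1 vA cA.
- by rewrite !inE uA orbT.
- by rewrite !inE eqxx.
- by apply: contraNneq vA => <-.
- by rewrite setU1K.
- apply/setP=> x; rewrite !inE.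
  case: (eqVneq x u) => [->|xu] /=; first by rewrite (negbTE uB).
  case: (eqVneq x v) => [->|xv] /=; first by rewrite vB.
  case xA: (x \in A); case xB: (x \in B) => //.
  + by have := setD_set1E x AB; rewrite xA xB (negbTE xu).
  + by have := setD_set1E x BA; rewrite xA xB (negbTE xv).
Qed.

Lemma ts_adj_triangle k (P Q : kclique e k) : 2 <= k -> ts_adj P Q ->
  exists R : kclique e k, ts_adj P R /\ ts_adj Q R.
Proof.
move=> k2 /ts_adj_block [u [v [C [[clC cC uC vC] [uv EP EQ]]]]].
have [w wC] : exists2 w, w \in C & w \notin [:: u; v] by apply: exists_notin; rewrite cC.
rewrite !inE negb_or => /andP [wu wv].
have [R ER] := kclique_of_setD1 clC cC wC.
by exists R; rewrite !ts_adjE ER EP EQ; split; apply: ts_step_setD1; rewrite // eq_sym.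
Qed.

Lemma ts_adj_K4 k (P Q : kclique e k) : 3 <= k -> ts_adj P Q ->
  exists R S : kclique e k,
    [/\ ts_adj P R, ts_adj Q R, ts_adj P S, ts_adj Q S & ts_adj R S].
Proof.
move=> k3 /ts_adj_block [u [v [C [[clC cC uC vC] [uv EP EQ]]]]].
have [w wC] : exists2 w, w \in C & w \notin [:: u; v].
  by apply: exists_notin; rewrite cC /=; lia.
rewrite !inE negb_or => /andP [wu wv].
have [w' w'C] : exists2 w', w' \in C & w' \notin [:: u; v; w].
  by apply: exists_notin; rewrite cC /=; lia.
rewrite !inE !negb_or => /and3P [w'u w'v w'w].
have [R ER] := kclique_of_setD1 clC cC wC.
have [S ES] := kclique_of_setD1 clC cC w'C.
by exists R, S; rewrite !ts_adjE ER ES EP EQ; split; apply: ts_step_setD1; rewrite // eq_sym.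
Qed.

Lemma ts_common_neighbour_apex k (C X : {set T}) u v y :
  clique e C -> #|C| = k.+1 -> u \in C -> v \in C -> u != v ->
  clique e X -> #|X| = k -> ts_step e X (C :\ v) -> ts_step e X (C :\ u) ->
  y \in X -> y \notin C ->
  X = y |: (C :\ u :\ v) /\ clique e (y |: C).
Proof.
move=> clC cC uC vC uv clX cX XP XQ yX yC.
have yP : y \notin C :\ v by rewrite !inE (negbTE yC) andbF.
have yQ : y \notin C :\ u by rewrite !inE (negbTE yC) andbF.
have sub : X :\ y \subset C :\ u :\ v.
  apply/subsetP => x; rewrite !inE => /andP [xy xX].
  move: (ts_step_sub XP yX yP xX xy) (ts_step_sub XQ yX yQ xX xy).
  by rewrite !inE => /andP [-> ->] /andP [-> _].
have EX : X = y |: (C :\ u :\ v).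
  have vCu : v \in C :\ u by rewrite !inE eq_sym uv.
  move: cC; rewrite (card_setD1 uC) (card_setD1 vCu) => -[cC].
  apply/eqP; rewrite eqEcard -{1}(setD1K yX) (setUS _ sub) cardsU1 !inE.
  by rewrite (negbTE yC) !andbF /= cX; lia.
split=> //; apply: clique_setU1 => // c cC'.
have uX : u \notin X by rewrite EX !inE eqxx !andbF orbF; apply: contraNneq yC => <-.
have vX : v \notin X by rewrite EX !inE eqxx /= orbF; apply: contraNneq yC => <-.
case: (eqVneq c u) => [->|cu]; last case: (eqVneq c v) => [->|cv].
- by apply: (ts_step_edge XP yX yP); rewrite // !inE uv.
- by apply: (ts_step_edge XQ yX yQ); rewrite // !inE eq_sym uv.
- apply: clX => //; first by rewrite EX !inE cu cv cC' orbT.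
  by apply: contraNneq yC => ->.
Qed.

Lemma apex_kclique_adj k (C : {set T}) y u v w :
  clique e (y |: C) -> y \notin C -> #|C| = k.+1 -> u \in C -> v \in C -> w \in C ->
  u != v -> w != u -> w != v ->
  exists Y : kclique e k, [/\ ts_step e (val Y) (C :\ u), y \in val Y & v \in val Y].
Proof.
move=> clyC yC cC uC vC wC uv wu wv.
pose K := (y |: C) :\ u.
have clK : clique e K by apply: clique_subset clyC; apply: subsetDl.
have cK : #|K| = k.+1.
  have uyC : u \in y |: C by rewrite !inE uC orbT.
  by move: (cardsU1 y C); rewrite yC cC (card_setD1 uyC) => -[].
have yu : y != u by apply: contraNneq yC => ->.
have yw : y != w by apply: contraNneq yC => ->.
have wK : w \in K by rewrite !inE wu wC orbT.
have yK : y \in K by rewrite !inE eqxx yu.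
have [Y EY] := kclique_of_setD1 clK cK wK.
have CuK : C :\ u = K :\ y.
  apply/setP => x; rewrite !inE.
  by case: (eqVneq x y) => [->|] /=; rewrite ?(negbTE yC) ?andbF.
exists Y; rewrite EY CuK ts_step_setD1 1?eq_sym //; split=> //.
- by rewrite !inE eqxx yu yw.
- by rewrite !inE (eq_sym v w) wv (eq_sym v u) uv vC orbT.
Qed.

End Blocks.

Section CompleteAndDiamond.
Variables (T : finType) (e : rel T).
Hypothesis e_sym : symmetric e.

Lemma ts_complete_card k (P0 Q0 : kclique e k) : 2 <= k -> P0 != Q0 ->
  (forall P Q : kclique e k, P != Q -> ts_adj P Q) -> #|{: kclique e k}| = k.+1.
Proof.
move=> k2 PQ0 complete.
have [u [v [C [[clC cC uC vC] [uv EP EQ]]]]] := ts_adj_block e_sym (complete _ _ PQ0).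
have [w wC] : exists2 w, w \in C & w \notin [:: u; v] by apply: exists_notin; rewrite cC.
rewrite !inE negb_or => /andP [wu wv].
have [R ER] := kclique_of_setD1 clC cC wC.
have inC (D : kclique e k) : val D \subset C.
  apply/subsetP => y yD; apply: contraT => yC.
  have /kcliqueP [cD clD] := valP D.
  have adj (X : kclique e k) z : val X = C :\ z -> ts_step e (val D) (C :\ z).
    move=> EX; rewrite -EX -ts_adjE; apply: complete; apply: contraNneq yC => DX.
    by move: yD; rewrite DX EX inE => /andP [].
  have uw : u != w by rewrite eq_sym.
  have [EDv _] := ts_common_neighbour_apex e_sym clC cC uC vC uv clD cD
    (adj _ _ EP) (adj _ _ EQ) yD yC.
  have [EDw _] := ts_common_neighbour_apex e_sym clC cC uC wC uw clD cD
    (adj _ _ ER) (adj _ _ EQ) yD yC.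
  move: EDw; rewrite EDv => /setP /(_ v).
  rewrite !inE eqxx (eq_sym v w) wv (eq_sym v u) uv vC /= orbF orbT => /eqP vy.
  by move: yC; rewrite -vy vC.
pose g z := insubd P0 (C :\ z).
have gE z : z \in C -> val (g z) = C :\ z.
  by move=> zC; rewrite insubdK //; apply: kclique_setD1.
have blockE : [set: kclique e k] = g @: C.
  apply/setP => D; rewrite inE; symmetry; apply/imsetP.
  have [z zC EDz] := subset_setD1 cC (card_kclique D) (inC D).
  by exists z => //; apply: val_inj; rewrite gE.
rewrite -cardsT blockE card_in_imset -?cC // => z1 z2 z1C z2C /(congr1 val).
by rewrite !gE //; apply: setD1_inj.
Qed.

Lemma ts_diamond k (P Q R S : kclique e k) : 2 <= k -> ts_adj P Q ->
  ts_adj R P -> ts_adj R Q -> ts_adj S P -> ts_adj S Q -> R != S ->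
  (forall X, X != P -> ts_adj X Q -> ts_adj X P) -> ts_adj R S.
Proof.
move=> k2 PQ RP RQ SP SQ RS closed.
have [u [v [C [[clC cC uC vC] [uv EP EQ]]]]] := ts_adj_block e_sym PQ.
have [w wC] : exists2 w, w \in C & w \notin [:: u; v] by apply: exists_notin; rewrite cC.
rewrite !inE negb_or => /andP [wu wv].
have inC (X : kclique e k) : ts_adj X P -> ts_adj X Q -> val X \subset C.
  move=> XP XQ; apply/subsetP => y yX; apply: contraT => yC.
  have /kcliqueP [cX clX] := valP X.
  rewrite !ts_adjE EP EQ in XP XQ.
  have [_ clyC] := ts_common_neighbour_apex e_sym clC cC uC vC uv clX cX XP XQ yX yC.
  have [Y [YQ yY vY]] := apex_kclique_adj clyC yC cC uC vC wC uv wu wv.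
  rewrite -EQ -ts_adjE in YQ.
  have yP : y \notin val P by rewrite EP !inE (negbTE yC) andbF.
  have vP : v \notin val P by rewrite EP !inE eqxx.
  have YP : Y != P by apply: contraNneq yP => <-.
  have yv := ts_step_out_uniq (closed _ YP YQ) yY yP vY vP.
  by move: yC; rewrite yv vC.
have [zR zRC ER] := subset_setD1 cC (card_kclique R) (inC R RP RQ).
have [zS zSC ES] := subset_setD1 cC (card_kclique S) (inC S SP SQ).
have zRS : zR != zS by apply: contra_neq RS => zRS; apply: val_inj; rewrite ER ES zRS.
by rewrite ts_adjE ER ES ts_step_setD1.
Qed.

End CompleteAndDiamond.

Section Transfer.
Variables (V : finType) (eG : rel V).

Lemma KTS_witness k : KTS eG k -> exists (T : finType) (eH : rel T)
  (f : V -> kclique eH k) (g : kclique eH k -> V),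
  [/\ symmetric eH, cancel f g, cancel g f & forall x y, ts_adj (f x) (f y) = eG x y].
Proof. by case=> _ [T [eH [[eHsym _] [f [[g fK gK] fE]]]]]; exists T, eH, f, g. Qed.

Lemma KTS_edge_triangle k a b : 2 <= k -> KTS eG k -> eG a b ->
  exists c, eG a c /\ eG b c.
Proof.
move=> k2 /KTS_witness [T [eH [f [g [eHsym fK gK fE]]]]] ab.
have [R [PR QR]] := ts_adj_triangle eHsym k2 (etrans (fE a b) ab).
by exists (g R); rewrite -!fE gK.
Qed.

Lemma KTS_edge_K4 k a b : 3 <= k -> KTS eG k -> eG a b ->
  exists c d, [/\ eG a c, eG b c, eG a d, eG b d & eG c d].
Proof.
move=> k3 /KTS_witness [T [eH [f [g [eHsym fK gK fE]]]]] ab.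
have [R [S [PR QR PS QS RS]]] := ts_adj_K4 eHsym k3 (etrans (fE a b) ab).
by exists (g R), (g S); rewrite -!fE !gK.
Qed.

Lemma KTS_complete_card k (a b : V) : 2 <= k -> KTS eG k ->
  (forall x y : V, eG x y = (x != y)) -> a != b -> #|V| = k.+1.
Proof.
move=> k2 /KTS_witness [T [eH [f [g [eHsym fK gK fE]]]]] eGE ab.
rewrite (bij_eq_card (Bijective fK gK)).
apply: (ts_complete_card eHsym k2 (P0 := f a) (Q0 := f b)).
  by rewrite (can_eq fK).
by move=> P Q PQ; rewrite -(gK P) -(gK Q) fE eGE (can_eq gK).
Qed.

Lemma KTS_diamond k a b c d : 2 <= k -> KTS eG k -> eG a b ->
  (forall x, x != a -> eG x b -> eG x a) ->
  eG c a -> eG c b -> eG d a -> eG d b -> c != d -> eG c d.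
Proof.
move=> k2 /KTS_witness [T [eH [f [g [eHsym fK gK fE]]]]] ab closed ca cb da db cd.
rewrite -fE; apply: (ts_diamond eHsym (P := f a) (Q := f b)); rewrite ?fE ?(can_eq fK) //.
by move=> X; rewrite -(gK X) (can_eq fK) !fE; apply: closed.
Qed.

End Transfer.

Lemma graph_iso_sym (V W : finType) (eV : rel V) (eW : rel W) :
  graph_iso eV eW -> graph_iso eW eV.
Proof.
case=> f [[g fK gK] fE]; exists g; split; first by exists f.
by move=> x y; rewrite -fE !gK.
Qed.

Lemma graph_iso_eq (V : finType) (e1 e2 : rel V) : e1 =2 e2 -> graph_iso e1 e2.
Proof. by move=> E; exists id; split; [exists id | move=> x y; rewrite E]. Qed.

Lemma KTS_iso (V W : finType) (eV : rel V) (eW : rel W) k :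
  graph_iso eV eW -> KTS eW k -> KTS eV k.
Proof.
case=> f [fbij fE] [k1 [T [eH [simple [h [hbij hE]]]]]].
split=> //; exists T, eH; split=> //; exists (h \o f); split; first exact: bij_comp.
by move=> x y /=; rewrite hE fE.
Qed.

Lemma inj_surj_bij (A B : finType) (f : A -> B) :
  injective f -> (forall y, exists x, f x = y) -> bijective f.
Proof.
move=> finj fsurj; have ex y : exists x, f x == y by have [x <-] := fsurj y; exists x.
exists (fun y => xchoose (ex y)) => [x|y]; last exact/eqP/(xchooseP (ex y)).
by apply: finj; apply/eqP/(xchooseP (ex (f x))).
Qed.

Section SmallCliques.
Variables (T : finType) (e : rel T).
Hypotheses (e_sym : symmetric e) (e_irr : irreflexive e).

Lemma setD_set2 (a b c : T) : a != b -> b != c -> [set a; b] :\: [set a; c] = [set b].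
Proof.
move=> ab bc; apply/setP => z; rewrite !inE.
case: (eqVneq z a) => [->|_] /=; first by rewrite (negbTE ab).
by case: (eqVneq z b) => [->|_]; rewrite ?(negbTE bc) ?andbF.
Qed.

Lemma ts_step_set1 (x y : T) : ts_step e [set x] [set y] = e x y.
Proof.
case: (eqVneq x y) => [<-|xy]; first by rewrite ts_step_irr e_irr.
have set1D a b : a != b -> [set a] :\: [set b] == [set a].
  move=> ab; apply/eqP/setP => z; rewrite !inE andbC.
  by case: (eqVneq z a) => //= ->.
apply/idP/idP => [xy_step|exy].
  by apply: (ts_step_edge xy_step); rewrite !inE ?eqxx // eq_sym.
by apply: ts_stepI exy; apply: set1D; rewrite // eq_sym.
Qed.

Lemma kclique1 (x : T) : is_kclique e 1 [set x].
Proof.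
apply/kcliqueP; split; first exact: cards1.
by move=> a b; rewrite !inE => /eqP -> /eqP ->; rewrite eqxx.
Qed.

Lemma kclique2 (a b : T) : e a b -> is_kclique e 2 [set a; b].
Proof.
move=> ab; have nab : a != b by apply: contraTneq ab => ->; rewrite e_irr.
apply/kcliqueP; split; first by rewrite cards2 nab.
move=> x y; rewrite !inE => /orP [/eqP->|/eqP->] /orP [/eqP->|/eqP->];
  rewrite ?eqxx // => _; by rewrite e_sym.
Qed.

Lemma ts_step_share (a b c : T) : a != b -> a != c -> b != c ->
  ts_step e [set a; b] [set a; c] = e b c.
Proof.
move=> ab ac bc; apply/idP/idP => [step|bc_edge].
  apply: (ts_step_edge step); rewrite !inE ?eqxx ?orbT // negb_or.
  - by rewrite eq_sym ab bc.
  - by rewrite eq_sym ac eq_sym bc.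
by apply: (ts_stepI _ _ bc_edge); apply/eqP; apply: setD_set2; rewrite // eq_sym.
Qed.

Lemma ts_step_disjoint (a b c d : T) : a != b -> a != c -> a != d -> b != c -> b != d ->
  ts_step e [set a; b] [set c; d] = false.
Proof.
move=> ab ac ad bc bd; apply/negbTE/negP => step.
suff ab' : a = b by rewrite ab' eqxx in ab.
by apply: (ts_step_out_uniq step); rewrite !inE ?eqxx ?orbT // negb_or ?ac ?ad ?bc ?bd.
Qed.

End SmallCliques.

Lemma KTS_1 (V : finType) (eG : rel V) : simple_graph eG -> KTS eG 1.
Proof.
move=> [G_sym G_irr]; split=> //; exists V, eG; split=> //.
exists (fun x => exist (is_kclique eG 1) [set x] (kclique1 eG x)); split.
  apply: inj_surj_bij; first by move=> x y /(congr1 val) /set1_inj.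
  move=> [A HA]; have /cards1P [x Ex] : #|A| == 1 by rewrite (card_kclique (exist _ A HA)).
  by exists x; apply: val_inj; rewrite /= Ex.
by move=> x y; rewrite ts_adjE ts_step_set1.
Qed.

Lemma Kn_simple n : simple_graph (Kn n).
Proof. by split=> [x y|x]; rewrite /Kn ?eqxx // eq_sym. Qed.

Lemma KTS_K1 k : 1 <= k -> KTS (Kn 1) k.
Proof.
move=> k1; split=> //; exists 'I_k, (Kn k); split; first exact: Kn_simple.
have full : is_kclique (Kn k) k [set: 'I_k].
  by apply/kcliqueP; split; [rewrite cardsT card_ord | move=> a b _ _].
exists (fun _ => exist (is_kclique (Kn k) k) _ full); split.
  exists (fun _ => ord0) => [x|P]; first by rewrite (ord1 x).
  apply: val_inj; apply/esym/eqP.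
  by rewrite eqEcard subsetT cardsT card_ord (card_kclique P) leqnn.
by move=> x y; rewrite (ord1 x) (ord1 y) ts_adjE ts_step_irr /Kn eqxx.
Qed.

Lemma KTS_Kn_pred n : 2 <= n -> KTS (Kn n) (n - 1).
Proof.
move=> n2; split; first by lia.
exists 'I_n, (Kn n); split; first exact: Kn_simple.
have coclique x : is_kclique (Kn n) (n - 1) (~: [set x]).
  by apply/kcliqueP; split; [rewrite cardsC1 card_ord subn1 | move=> a b _ _].
exists (fun x => exist (is_kclique (Kn n) (n - 1)) _ (coclique x)); split.
  apply: inj_surj_bij; first by move=> x y /(congr1 val) /setC_inj /set1_inj.
  move=> [A HA]; have cA := card_kclique (exist _ A HA).
  have /cards1P [x Ex] : #|~: A| == 1 by rewrite cardsCs setCK card_ord /= cA; apply/eqP; lia.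
  by exists x; apply: val_inj; rewrite /= -Ex setCK.
move=> x y; rewrite ts_adjE /= /Kn.
case: (eqVneq x y) => [->|xy]; first by rewrite ts_step_irr.
have yx : y != x by rewrite eq_sym.
apply: (@ts_stepI _ _ _ _ y x); rewrite /Kn ?yx //; apply/eqP/setP => z; rewrite !inE.
- by case: (eqVneq z y) => [->|]; rewrite ?yx ?andbF.
- by case: (eqVneq z x) => [->|]; rewrite ?xy ?andbF.
Qed.

Section Friendship.
Variable p : nat.

(* B_p with spine [bool] and pages ['I_p]; F_p with centre [None] and i-th triangle
   [None, Some (false, i), Some (true, i)]. *)
Definition book : rel (bool + 'I_p) := fun x y =>
  match x, y with
  | inl a, inl b => a != b
  | inr _, inr _ => false
  | _, _ => true
  end.

Definition friendship : rel (option (bool * 'I_p)) := fun x y =>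
  match x, y with
  | None, None => false
  | Some (a, i), Some (b, j) => (i == j) && (a != b)
  | _, _ => true
  end.

Lemma book_simple : simple_graph book.
Proof. by split=> [[a|i] [b|j]|[a|i]] //=; rewrite ?eqxx // eq_sym. Qed.

Definition book_edge (o : option (bool * 'I_p)) : {set bool + 'I_p} :=
  if o is Some (b, i) then [set inl b; inr i] else [set inl false; inl true].

Lemma book_edge_kclique o : is_kclique book 2 (book_edge o).
Proof. by have [bsym birr] := book_simple; case: o => [[b i]|]; apply: kclique2. Qed.

Lemma book_edge_inj : injective book_edge.
Proof.
move=> x y E; have mem z : (z \in book_edge x) = (z \in book_edge y) by rewrite E.
case: x y E mem => [[a i]|] [[b j]|] //= E mem.
- move: (mem (inr i)) (mem (inl a)); rewrite !inE /= !eqxx /=.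
  by move=> /esym /eqP [->] /esym /orP [/eqP [->] //|/eqP].
- by move: (mem (inr i)); rewrite !inE /= !eqxx.
- by move: (mem (inr j)); rewrite !inE /= !eqxx.
Qed.

Lemma book_edge_surj (A : {set bool + 'I_p}) : is_kclique book 2 A ->
  exists o, book_edge o = A.
Proof.
move=> /kcliqueP [cA clA].
have /cards2P [x [y [xy Exy]]] : #|A| == 2 by rewrite cA.
have exy : book x y by apply: clA; rewrite // Exy !inE eqxx ?orbT.
case: x y xy exy Exy => [a|i] [b|j] //= xy exy ->.
- by exists None; case: a b xy {exy} => -[] //= _; rewrite setUC.
- by exists (Some (a, j)).
- by exists (Some (b, i)); rewrite /= setUC.
Qed.

Lemma ts_step_book_edge x y : ts_step book (book_edge x) (book_edge y) = friendship x y.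
Proof.
have [bsym birr] := book_simple.
case: x y => [[a i]|] [[b j]|] /=.
- case: (eqVneq i j) => [<-|ij]; case: (eqVneq a b) => [<-|ab] /=.
  + by rewrite ts_step_irr.
  + by rewrite [[set inl a; inr i]]setUC [[set inl b; inr i]]setUC ts_step_share.
  + by rewrite ts_step_share.
  + by rewrite ts_step_disjoint //= ?andbF.
- have -> : [set inl false; inl true] = [set @inl bool 'I_p a; inl (~~ a)] :> {set _}.
    by case: a => //; rewrite setUC.
  by rewrite ts_step_share //; case: a.
- have -> : [set inl false; inl true] = [set @inl bool 'I_p b; inl (~~ b)] :> {set _}.
    by case: b => //; rewrite setUC.
  by rewrite ts_step_share //; case: b.
- by rewrite ts_step_irr.
Qed.

Lemma friendship_ts_book : graph_iso friendship (@ts_adj _ book 2).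
Proof.
exists (fun o => exist (is_kclique book 2) _ (book_edge_kclique o)); split.
  apply: inj_surj_bij; first by move=> x y /(congr1 val) /book_edge_inj.
  move=> [A HA]; have [o Eo] := book_edge_surj HA.
  by exists o; apply: val_inj; rewrite /= Eo.
by move=> x y; rewrite ts_adjE ts_step_book_edge.
Qed.

Definition friendship_ord (o : option (bool * 'I_p)) : 'I_(p.*2.+1) :=
  if o is Some (b, i) then inord (b + i.*2).+1 else ord0.

Lemma friendship_ordE b i : val (friendship_ord (Some (b, i))) = (b + (nat_of_ord i).*2).+1.
Proof. by rewrite /= inordK //; move: (ltn_ord i); case: b; lia. Qed.

Lemma friendship_Fp : graph_iso friendship (Fp p).
Proof.
exists friendship_ord; split.
  apply: inj_surj_bij.
  - move=> [[a i]|] [[b j]|] /eqP; rewrite -val_eqE ?friendship_ordE //= eqSS => /eqP E.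
    have ij : nat_of_ord i = j by case: a E; case: b; lia.
    have ab : a = b by case: a E; case: b => //= E; lia.
    by rewrite ab (val_inj ij).
  - move=> x; case: (eqVneq (val x) 0) => [x0|x0].
      by exists None; apply: val_inj; rewrite x0.
    have x0' : nat_of_ord x != 0 := x0.
    have half_lt : (x.-1)./2 < p by move: (ltn_ord x) x0'; lia.
    exists (Some (odd x.-1, Ordinal half_lt)); apply: val_inj.
    by rewrite friendship_ordE /= odd_double_half prednK // lt0n.
move=> [[a i]|] [[b j]|]; rewrite /Fp -val_eqE ?friendship_ordE //=.
rewrite !half_bit_double eqSS.
case: (eqVneq i j) => [<-|ij]; rewrite ?andbT ?andbF.
- by rewrite eqxx andbT eqn_add2r; case: a; case: b.
- by rewrite val_eqE (negbTE ij) andbF.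
Qed.

End Friendship.

Lemma KTS_Fp2 p : KTS (Fp p) 2.
Proof.
apply: (KTS_iso (graph_iso_sym (@friendship_Fp p))).
by split=> //; exists _, (@book p); split; [apply: book_simple | apply: friendship_ts_book].
Qed.

Lemma KTS_triangle_free (V : finType) (eG : rel V) a b : simple_graph eG -> eG a b ->
  (forall x y z, eG x y -> eG y z -> eG x z -> False) -> forall k, KTS eG k <-> k = 1.
Proof.
move=> sG ab triangle_free k; split=> [kts|->]; last exact: KTS_1.
have [k1 _] := kts; case: (ltnP k 2) => k2; first by lia.
have [c [ac bc]] := KTS_edge_triangle k2 kts ab.
by case: (triangle_free a b c).
Qed.

Lemma KTS_Kn n : 3 <= n -> forall k, KTS (Kn n) k <-> k = 1 \/ k = n - 1.
Proof.
move=> n3 k; split=> [kts|[->|->]]; [|exact: KTS_1 (Kn_simple n)|apply: KTS_Kn_pred; lia].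
have [k1 _] := kts; case: (ltnP k 2) => k2; first by left; lia.
have n0 : 0 < n by lia. have n1 : 1 < n by lia.
have := KTS_complete_card (a := Ordinal n0) (b := Ordinal n1) k2 kts (fun x y => erefl) isT.
by rewrite card_ord => ->; right; lia.
Qed.

Lemma K2_triangle_free (x y z : 'I_2) : Kn 2 x y -> Kn 2 y z -> Kn 2 x z -> False.
Proof. by rewrite /Kn -!val_eqE /=; move: (ltn_ord x) (ltn_ord y) (ltn_ord z); lia. Qed.

Lemma Pn_simple n : simple_graph (Pn n).
Proof. by split=> [x y|x]; rewrite /Pn 1?orbC //; lia. Qed.

Lemma Pn_triangle_free n (x y z : 'I_n) : Pn n x y -> Pn n y z -> Pn n x z -> False.
Proof. rewrite /Pn; lia. Qed.

Lemma Cn_simple n : simple_graph (Cn n).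
Proof. by split=> [x y|x]; rewrite /Cn ?eqxx // eq_sym orbC. Qed.

Lemma modS_ord n (x y : 'I_n) :
  (x.+1 %% n == y) = (x.+1 == y) || (x.+1 == n) && (nat_of_ord y == 0).
Proof.
move: (ltn_ord x) (ltn_ord y) => xn yn.
case: (ltnP x.+1 n) => xn'; first by rewrite modn_small //; lia.
have -> : x.+1 = n by lia.
by rewrite modnn; lia.
Qed.

Lemma Cn_triangle_free n (x y z : 'I_n) : 4 <= n -> Cn n x y -> Cn n y z -> Cn n x z -> False.
Proof. by rewrite /Cn !modS_ord -!val_eqE; move: (ltn_ord x) (ltn_ord y) (ltn_ord z); lia. Qed.

Lemma Kmn_simple m n : simple_graph (Kmn m n).
Proof. by split=> [[x|x] [y|y]|[x|x]]. Qed.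

Lemma Kmn_triangle_free m n (x y z : 'I_m + 'I_n) :
  Kmn m n x y -> Kmn m n y z -> Kmn m n x z -> False.
Proof. by case: x; case: y; case: z. Qed.

Lemma Bp_simple p : simple_graph (Bp p).
Proof. by split=> [x y|x]; rewrite /Bp ?eqxx // eq_sym orbC. Qed.

Lemma Bp1_K3 : Bp 1 =2 Kn 3.
Proof.
move=> x y; rewrite /Bp /Kn; case: (eqVneq x y) => //=; rewrite -val_eqE.
by move: (ltn_ord x) (ltn_ord y) => /=; lia.
Qed.

Lemma Fp_simple p : simple_graph (Fp p).
Proof.
split=> [x y|x]; rewrite /Fp ?eqxx // eq_sym; congr (_ && _).
by rewrite orbA (orbC (_ == 0)) -orbA (eq_sym ((y.-1)./2)).
Qed.

Lemma Fp_K4_free p (x y z w : 'I_(p.*2.+1)) : Fp p x y -> Fp p x z -> Fp p x w ->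
  Fp p y z -> Fp p y w -> Fp p z w -> False.
Proof.
rewrite /Fp -!val_eqE /=; move: (nat_of_ord x) (nat_of_ord y) (nat_of_ord z) (nat_of_ord w).
move=> {}x {}y {}z {}w; case: (eqVneq x 0) => [->|x0]; case: (eqVneq y 0) => [->|y0];
  case: (eqVneq z 0) => [->|z0]; case: (eqVneq w 0) => [->|w0] /=; lia.
Qed.

Lemma KTS_Bp p : 2 <= p -> forall k, KTS (Bp p) k <-> k = 1.
Proof.
move=> p2 k; split=> [kts|->]; last exact: KTS_1 (Bp_simple p).
have [k1 _] := kts; case: (ltnP k 2) => k2; first by lia.
have i1 : 1 < p.+2 by lia. have i2 : 2 < p.+2 by lia. have i3 : 3 < p.+2 by lia.
suff : Bp p (inord 2) (inord 3) by rewrite /Bp -val_eqE /= !inordK.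
apply: (KTS_diamond (a := ord0) (b := inord 1) k2 kts);
  rewrite /Bp -?val_eqE /= ?inordK // => x.
by rewrite -!val_eqE /= inordK //; lia.
Qed.

Lemma KTS_Fp p : 1 <= p -> forall k, KTS (Fp p) k <-> k = 1 \/ k = 2.
Proof.
move=> p1 k; split=> [kts|[->|->]]; [|exact: KTS_1 (Fp_simple p)|exact: KTS_Fp2].
have [k1 _] := kts; case: (ltnP k 3) => k3; first by lia.
have i1 : 1 < p.*2.+1 by lia.
have ab : Fp p ord0 (inord 1) by rewrite /Fp -val_eqE /= inordK.
have [c [d [ac bc ad bd cd]]] := KTS_edge_K4 k3 kts ab.
by case: (Fp_K4_free ab ac ad bc bd cd).
Qed.

Theorem theorem3p3 :
  (* (1) complete graphs *)
  (forall k, KTS (Kn 1) k <-> 1 <= k) /\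
  (forall k, KTS (Kn 2) k <-> k = 1) /\
  (forall n, 3 <= n -> forall k, KTS (Kn n) k <-> k = 1 \/ k = n - 1) /\
  (* (2) paths, cycles, complete bipartite graphs *)
  (forall n, 2 <= n -> forall k, KTS (Pn n) k <-> k = 1) /\
  (forall n, 4 <= n -> forall k, KTS (Cn n) k <-> k = 1) /\
  (forall m n, 1 <= m -> 1 <= n -> forall k, KTS (Kmn m n) k <-> k = 1) /\
  (* (3) book graphs *)
  (forall k, KTS (Bp 1) k <-> k = 1 \/ k = 2) /\
  (forall p, 2 <= p -> forall k, KTS (Bp p) k <-> k = 1) /\
  (* (4) friendship graphs *)
  (forall p, 1 <= p -> forall k, KTS (Fp p) k <-> k = 1 \/ k = 2).
Proof.
split; first by move=> k; split=> [[]|]; last exact: KTS_K1.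
split.
  by apply: (KTS_triangle_free (a := ord0) (b := ord_max) (Kn_simple 2)) => //;
    apply: K2_triangle_free.
split; first exact: KTS_Kn.
split.
  move=> n n2; have n0 : 0 < n by lia.
  by apply: (KTS_triangle_free (a := Ordinal n0) (b := Ordinal n2) (Pn_simple n)) => //;
    apply: Pn_triangle_free.
split.
  move=> n n4; have n0 : 0 < n by lia. have n1 : 1 < n by lia.
  apply: (KTS_triangle_free (a := Ordinal n0) (b := Ordinal n1) (Cn_simple n)).
    by rewrite /Cn modS_ord -val_eqE /=; lia.
  by move=> x y z; apply: Cn_triangle_free.
split.
  move=> m n m1 n1.
  by apply: (KTS_triangle_free (a := inl (Ordinal m1)) (b := inr (Ordinal n1)) (Kmn_simple m n))
    => //; apply: Kmn_triangle_free.
split.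
  move=> k; rewrite -(KTS_Kn (n := 3)) //.
  by split; apply: KTS_iso; apply: graph_iso_eq => x y; rewrite Bp1_K3.
by split; [exact: KTS_Bp | exact: KTS_Fp].
Qed.
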